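(* Let $\hat A\neq0$ be a Hermitian operator on $L^2(\mathbb R)$ with bounded Fock support. The following are equivalent: (i) $\hat A$ is an eigenvector of $\mathcal V_t$ (i.e. $\mathcal V_t[\hat A]=\lambda\hat A$ for some $\lambda$) for some $t>1$; (ii) $\hat A$ is an eigenvector of $\mathcal V_t$ for all $t\ge1$; (iii) the Wigner function of $\hat A$ has the form $W_{\hat A}(\alpha)=H(\alpha,\alpha^* )e^{-2|\alpha|^2}$ where $H(\alpha,\alpha^* )=\sum_{a+b=m}p_{ab}\alpha^a\alpha^{*b}$ is a real-valued homogeneous polynomial of total degree $m$ in $\alpha,\alpha^*$. Moreover, the corresponding eigenvalue is $\sqrt t^{\,m}$.
   Context: Let $\hat a$ be the annihilation operator on $L^2(\mathbb R)$, $\hat n=\hat a^\dagger\hat a$, $\{|k\rangle\}$ the Fock basis, $\hat D(\alpha)=\exp(\alpha\hat a^\dagger-\alpha^*\hat a)$, and $W_{\hat A}(\alpha)=\frac2\pi\mathrm{Tr}[\hat A\hat D(\alpha)(-1)^{\hat n}\hat D(\alpha)^\dagger]$ the Wigner function. $\hat A$ has bounded Fock support if $\hat P_N\hat A\hat P_N=\hat A$ for some $N$, where $\hat P_N=\sum_{k=0}^N|k\rangle\langle k|$. For $t>0$, the Vertigo map on such operators is $\mathcal V_t[\hat A]=\sum_{k\ge0}\frac{(t-1)^k}{k!}t^{\hat n/2}\hat a^k\hat A\hat a^{\dagger k}t^{\hat n/2}$ (finite sum), equivalently characterized by $W_{\mathcal V_t[\hat A]}(\alpha)=W_{\hat A}(\sqrt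 t\alpha)e^{2(t-1)|\alpha|^2}$. *)

From Stdlib Require Import Reals Factorial.
From Coquelicot Require Import Coquelicot.
Open Scope R_scope.

(* Operators with Fock support in {0..N} are represented by their Fock-basis
   matrix elements A i j = <i|A|j>, a function nat -> nat -> C vanishing
   outside [0,N]x[0,N]. *)
Definition Op := nat -> nat -> Complex.C.

Definition bounded_support (N : nat) (A : Op) : Prop :=
  forall i j, (N < i)%nat \/ (N < j)%nat -> A i j = RtoC 0.

Definition hermitian (A : Op) : Prop :=
  forall i j, A j i = Cconj (A i j).

Fixpoint Cpow (z : Complex.C) (n : nat) : Complex.C :=
  match n with O => RtoC 1 | S n => Cmult z (Cpow z n) end.

Fixpoint Csum (f : nat -> Complex.C) (n : nat) : Complex.C :=
  match n with O => f O | S n => Cplus (Csum f n) (f (S n)) end.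

Definition factR (n : nat) : R := INR (Factorial.fact n).

(* Vertigo map, N a bound on the Fock support of A:
   <i|V_t[A]|j> = sum_k (t-1)^k/k! * t^(i/2) t^(j/2)
                  * sqrt((i+k)!/i!) sqrt((j+k)!/j!) <i+k|A|j+k>,
   i.e. the matrix elements of
   sum_k (t-1)^k/k! t^(n/2) a^k A a^dag^k t^(n/2); terms with k > N vanish. *)
Definition Vertigo (N : nat) (t : R) (A : Op) : Op :=
  fun i j => Csum (fun k =>
     Cmult (RtoC ((t - 1) ^ k / factR k * sqrt t ^ i * sqrt t ^ j
                  * sqrt (factR (i + k) / factR i)
                  * sqrt (factR (j + k) / factR j)))
           (A (i + k)%nat (j + k)%nat)) N.

(* Fock matrix elements of the displacement operator
   D(alpha) = e^{-|alpha|^2/2} e^{alpha a^dag} e^{-alpha^* a}: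
   <m|D(alpha)|n> = e^{-|alpha|^2/2} sum_{l <= min m n}
      alpha^(m-l) (-alpha^* )^(n-l) sqrt(m! n!) / (l! (m-l)! (n-l)!). *)
Definition Dmat (alpha : Complex.C) (m n : nat) : Complex.C :=
  Cmult (RtoC (exp (- (Cmod alpha ^ 2) / 2)))
    (Csum (fun l =>
       Cmult (Cmult (Cpow alpha (m - l)) (Cpow (Copp (Cconj alpha)) (n - l)))
             (RtoC (sqrt (factR m * factR n)
                    / (factR l * factR (m - l) * factR (n - l)))))
     (Nat.min m n)).

(* k-th term of Tr[A D(alpha) (-1)^n D(alpha)^dag] in the Fock basis:
   sum_{i,j <= N} <i|A|j> <j|D|k> (-1)^k <k|D^dag|i>. *)
Definition wigner_term (N : nat) (A : Op) (alpha : Complex.C) (k : nat)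
  : Complex.C :=
  Csum (fun i => Csum (fun j =>
     Cmult (Cmult (A i j) (Dmat alpha j k))
           (Cmult (RtoC ((-1) ^ k)) (Cconj (Dmat alpha i k)))) N) N.

(* Wigner function W_A(alpha) = 2/pi Tr[A D(alpha)(-1)^n D(alpha)^dag],
   the trace being the (convergent) series over the Fock basis. *)
Definition Wigner (N : nat) (A : Op) (alpha : Complex.C) : Complex.C :=
  Cmult (RtoC (2 / PI))
    (Series (fun k => fst (wigner_term N A alpha k)),
     Series (fun k => snd (wigner_term N A alpha k))).

Definition is_eigenvector (N : nat) (t : R) (A : Op) : Prop :=
  exists lam : Complex.C, forall i j, Vertigo N t A i j = Cmult lam (A i j).

Definition homog_poly (m : nat) (p : nat -> Complex.C) (alpha : Complex.C)
  : Complex.C :=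
  Csum (fun a => Cmult (p a) (Cmult (Cpow alpha a) (Cpow (Cconj alpha) (m - a)))) m.

Definition wigner_form (N : nat) (A : Op) (m : nat) (p : nat -> Complex.C)
  : Prop :=
  (forall alpha, snd (homog_poly m p alpha) = 0) /\
  (forall alpha, Wigner N A alpha =
     Cmult (homog_poly m p alpha) (RtoC (exp (-2 * Cmod alpha ^ 2)))).

(* W_A(α) e^(2|α|²) is a polynomial in α and conj α: evaluating the trace with
   D(α) (-1)^n D(α)† = D(2α) (-1)^n shows that its coefficient of α^p conj(α)^q is a
   positive multiple of c_(q,p), where
     c_(i,j) = Σ_l (-1)^l / l! · sqrt((i+l)! (j+l)!) · <i+l|A|j+l>.
   A binomial identity shows that V_t multiplies c_(i,j) by t^((i+j)/2), and A ↦ c is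
   triangular along the diagonals of A, hence injective.  So for t > 1, A is an
   eigenvector of V_t exactly when c is supported on one antidiagonal i + j = m, that is,
   when the polynomial is homogeneous of degree m; the eigenvalue is then t^(m/2).
   Hermiticity makes the polynomial real, and a polynomial in α, conj α vanishing on C
   has zero coefficients: scaling α by reals separates the degrees, and a homogeneous
   part is conj(α)^d times a polynomial in α / conj α. *)

From Pilot Require Import Defs.
From Stdlib Require Import Reals Lia Lra Classical.
From Coquelicot Require Import Coquelicot.
Open Scope R_scope.

(** * Finite sums *)

Lemma Csum_ext (f g : nat -> C) n :
  (forall k, (k <= n)%nat -> f k = g k) -> Csum f n = Csum g n.
Proof.
  induction n as [|n IH]; intros H; simpl.
  - apply H; lia.
  - rewrite IH by (intros; apply H; lia); rewrite H by lia; reflexivity.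
Qed.

Lemma Csum_plus (f g : nat -> C) n :
  Csum (fun k => (f k + g k)%C) n = (Csum f n + Csum g n)%C.
Proof. induction n as [|n IH]; simpl; [|rewrite IH; ring]; reflexivity. Qed.

Lemma Csum_opp (f : nat -> C) n : Csum (fun k => (- f k)%C) n = (- Csum f n)%C.
Proof. induction n as [|n IH]; simpl; [|rewrite IH; ring]; reflexivity. Qed.

Lemma Csum_mult_l c (f : nat -> C) n : (c * Csum f n)%C = Csum (fun k => (c * f k)%C) n.
Proof. induction n as [|n IH]; simpl; [|rewrite <- IH; ring]; reflexivity. Qed.

Lemma Csum_mult_r c (f : nat -> C) n : (Csum f n * c)%C = Csum (fun k => (f k * c)%C) n.
Proof. induction n as [|n IH]; simpl; [|rewrite <- IH; ring]; reflexivity. Qed.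

Lemma Csum_eq0 (f : nat -> C) n :
  (forall k, (k <= n)%nat -> f k = RtoC 0) -> Csum f n = RtoC 0.
Proof.
  intros H; rewrite (Csum_ext f (fun _ => RtoC 0)) by exact H; clear H.
  induction n as [|n IH]; simpl; [|rewrite IH; ring]; reflexivity.
Qed.

Lemma Csum_RtoC (f : nat -> R) n : Csum (fun k => RtoC (f k)) n = RtoC (sum_f_R0 f n).
Proof. induction n as [|n IH]; simpl; [|rewrite IH, RtoC_plus]; reflexivity. Qed.

Lemma Csum_conj (f : nat -> C) n : Cconj (Csum f n) = Csum (fun k => Cconj (f k)) n.
Proof. induction n as [|n IH]; simpl; [|rewrite Cplus_conj, IH]; reflexivity. Qed.

Lemma Csum_shift (f : nat -> C) n : Csum f (S n) = (f O + Csum (fun k => f (S k)) n)%C.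
Proof. induction n as [|n IH]; simpl in *; [|rewrite IH; ring]; reflexivity. Qed.

Lemma Csum_swap (f : nat -> nat -> C) n m :
  Csum (fun i => Csum (f i) m) n = Csum (fun j => Csum (fun i => f i j) n) m.
Proof.
  induction n as [|n IH]; simpl; [|rewrite IH, <- Csum_plus]; reflexivity.
Qed.

Lemma Csum_delta (f : nat -> C) c n :
  Csum (fun k => if Nat.eqb k c then f k else RtoC 0) n =
  if Nat.leb c n then f c else RtoC 0.
Proof.
  induction n as [|n IH]; cbn [Csum].
  - destruct c; reflexivity.
  - rewrite IH.
    destruct (Nat.eqb_spec (S n) c), (Nat.leb_spec c n), (Nat.leb_spec c (S n));
      subst; try ring; lia.
Qed.

Lemma Csum_trunc (f : nat -> C) m n : (m <= n)%nat ->
  Csum (fun k => if Nat.leb k m then f k else RtoC 0) n = Csum f m.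
Proof.
  induction 1 as [|n Hmn IH].
  - apply Csum_ext; intros k Hk; destruct (Nat.leb_spec k m); [reflexivity | lia].
  - cbn [Csum]; rewrite IH; destruct (Nat.leb_spec (S n) m); [lia | ring].
Qed.

Lemma Csum_extend (f : nat -> C) m n : (m <= n)%nat ->
  (forall k, (m < k <= n)%nat -> f k = RtoC 0) -> Csum f n = Csum f m.
Proof.
  intros Hmn H; rewrite <- (Csum_trunc f m n Hmn); apply Csum_ext; intros k Hk.
  destruct (Nat.leb_spec k m); [reflexivity | apply H; lia].
Qed.

Lemma Csum_shift_index N l (g : nat -> C) :
  (forall i, (N < i)%nat -> g i = RtoC 0) ->
  Csum (fun q => g (q + l)%nat) N = Csum (fun i => if Nat.leb l i then g i else RtoC 0) N.
Proof.
  intros Hg.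
  transitivity (Csum (fun q => Csum (fun i =>
    if Nat.eqb i (q + l) then g i else RtoC 0) N) N).
  { apply Csum_ext; intros q Hq; rewrite Csum_delta.
    destruct (Nat.leb_spec (q + l) N); [reflexivity | apply Hg; lia]. }
  rewrite Csum_swap; apply Csum_ext; intros i Hi.
  destruct (Nat.leb_spec l i).
  - rewrite (Csum_ext _ (fun q => if Nat.eqb q (i - l) then g i else RtoC 0)).
    + rewrite (Csum_delta (fun _ => g i)); destruct (Nat.leb_spec (i - l) N); [reflexivity | lia].
    + intros q Hq; destruct (Nat.eqb_spec i (q + l)), (Nat.eqb_spec q (i - l));
        try reflexivity; lia.
  - apply Csum_eq0; intros q Hq; destruct (Nat.eqb_spec i (q + l)); [lia | reflexivity].
Qed.

Lemma Csum_cauchy N (h : nat -> nat -> C) (g : nat -> C) :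
  (forall n, (N < n)%nat -> g n = RtoC 0) ->
  Csum (fun l => Csum (fun k => (h l k * g (l + k)%nat)%C) N) N =
  Csum (fun n => (Csum (fun l => h l (n - l)%nat) n * g n)%C) N.
Proof.
  intros Hg.
  transitivity (Csum (fun l => Csum (fun n =>
    if Nat.leb l n then (h l (n - l)%nat * g n)%C else RtoC 0) N) N).
  { apply Csum_ext; intros l Hl.
    etransitivity; [|apply (Csum_shift_index N l (fun n => (h l (n - l)%nat * g n)%C))].
    - apply Csum_ext; intros k Hk; rewrite Nat.add_sub, Nat.add_comm; reflexivity.
    - intros n Hn; rewrite Hg by lia; ring. }
  rewrite Csum_swap; apply Csum_ext; intros n Hn.
  rewrite Csum_mult_r, <- (Csum_trunc _ n N Hn); apply Csum_ext; intros l Hl.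
  destruct (Nat.leb_spec l n); reflexivity.
Qed.

Lemma Csum_triangle N (F : nat -> nat -> nat -> C) :
  (forall i j l, (N < i)%nat \/ (N < j)%nat -> F i j l = RtoC 0) ->
  Csum (fun i => Csum (fun j => Csum (F i j) (Nat.min j i)) N) N =
  Csum (fun p => Csum (fun q => Csum (fun l => F (q + l)%nat (p + l)%nat l) N) N) N.
Proof.
  intros HF.
  set (G := fun l i j =>
    if Nat.leb l i then if Nat.leb l j then F i j l else RtoC 0 else RtoC 0).
  transitivity (Csum (fun l => Csum (fun i => Csum (G l i) N) N) N).
  { transitivity (Csum (fun i => Csum (fun l => Csum (G l i) N) N) N); [|apply Csum_swap].
    apply Csum_ext; intros i Hi; rewrite <- Csum_swap; apply Csum_ext; intros j Hj.
    rewrite <- (Csum_trunc _ (Nat.min j i) N) by lia; apply Csum_ext; intros l Hl; unfold G.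
    destruct (Nat.leb_spec l (Nat.min j i)), (Nat.leb_spec l i), (Nat.leb_spec l j);
      reflexivity || lia. }
  transitivity (Csum (fun l => Csum (fun q => Csum (fun p =>
    F (q + l)%nat (p + l)%nat l) N) N) N).
  2:{ symmetry; transitivity (Csum (fun p => Csum (fun l => Csum (fun q =>
        F (q + l)%nat (p + l)%nat l) N) N) N).
      - apply Csum_ext; intros p Hp; apply Csum_swap.
      - rewrite Csum_swap; apply Csum_ext; intros l Hl; apply Csum_swap. }
  apply Csum_ext; intros l Hl; symmetry.
  rewrite (Csum_shift_index N l (fun i => Csum (fun p => F i (p + l)%nat l) N)).
  2:{ intros i Hi; apply Csum_eq0; intros; apply HF; lia. }
  apply Csum_ext; intros i Hi; unfold G; destruct (Nat.leb l i).
  - apply (Csum_shift_index N l (fun j => F i j l)); intros j Hj; apply HF; lia.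
  - symmetry; apply Csum_eq0; reflexivity.
Qed.

(** * The coefficient transform and the Vertigo map *)

Lemma factR_pos n : 0 < factR n.
Proof. apply INR_fact_lt_0. Qed.

Lemma factR_0 : factR 0 = 1.
Proof. unfold factR; simpl; ring. Qed.

Lemma factR_S n : factR (S n) = INR (S n) * factR n.
Proof. unfold factR; rewrite fact_simpl, mult_INR; reflexivity. Qed.

Lemma Cconj_RtoC r : Cconj (RtoC r) = RtoC r.
Proof. apply injective_projections; simpl; ring. Qed.

Lemma RtoC_neq0 r : r <> 0 -> RtoC r <> RtoC 0.
Proof. intros Hr E; apply Hr, RtoC_inj, E. Qed.

Lemma Cmult_eq0_cancel_l (c z : C) : c <> RtoC 0 -> (c * z)%C = RtoC 0 -> z = RtoC 0.
Proof.
  intros Hc H; replace z with (/ c * (c * z))%C by (field; exact Hc); rewrite H; ring.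
Qed.

(* c_(i,j): up to the positive factor [wigner_weight j i], the coefficient of
   conj(α)^i α^j in W_A(α) e^(2|α|²) (see [Wigner_bipoly]). *)
Definition wcoef (N : nat) (A : Op) (i j : nat) : C :=
  Csum (fun l => (RtoC ((-1) ^ l / factR l * sqrt (factR (i + l) * factR (j + l)))
                  * A (i + l)%nat (j + l)%nat)%C) N.

Lemma wcoef_ext N (A B : Op) i j :
  (forall a b, A a b = B a b) -> wcoef N A i j = wcoef N B i j.
Proof. intros H; apply Csum_ext; intros; rewrite H; reflexivity. Qed.

Lemma wcoef_lin N (A B : Op) c i j :
  wcoef N (fun a b => (A a b + c * B a b)%C) i j = (wcoef N A i j + c * wcoef N B i j)%C.
Proof. unfold wcoef; rewrite Csum_mult_l, <- Csum_plus; apply Csum_ext; intros; ring. Qed.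

Lemma wcoef_out N A i j : bounded_support N A ->
  (N < i)%nat \/ (N < j)%nat -> wcoef N A i j = RtoC 0.
Proof. intros hs H; apply Csum_eq0; intros l Hl; rewrite hs by lia; ring. Qed.

Lemma wcoef_conj N A i j : hermitian A -> Cconj (wcoef N A i j) = wcoef N A j i.
Proof.
  intros hh; unfold wcoef; rewrite Csum_conj; apply Csum_ext; intros l Hl.
  rewrite Cmult_conj, Cconj_RtoC, <- hh, (Rmult_comm (factR (i + l))); reflexivity.
Qed.

(* Triangularity: [wcoef N A i j] is a nonzero multiple of [A i j] plus entries
   further down the same diagonal. *)
Lemma wcoef_eq0 N A : bounded_support N A ->
  (forall i j, wcoef N A i j = RtoC 0) -> forall i j, A i j = RtoC 0.
Proof.
  intros hs hw.
  assert (Hdiag : forall n i j, (N < i + n)%nat -> A i j = RtoC 0).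
  { induction n as [|n IH]; intros i j Hi.
    - apply hs; lia.
    - destruct (Nat.lt_ge_cases N (i + n)) as [H|H]; [apply IH; lia|].
      pose proof (hw i j) as Hij; unfold wcoef in Hij.
      rewrite (Csum_extend _ 0 N) in Hij
        by (lia || (intros k Hk; rewrite (IH (i + k)%nat) by lia; ring)).
      simpl in Hij; rewrite !Nat.add_0_r, factR_0 in Hij.
      refine (Cmult_eq0_cancel_l _ _ (RtoC_neq0 _ _) Hij).
      pose proof (factR_pos i); pose proof (factR_pos j).
      assert (0 < sqrt (factR i * factR j)) by (apply sqrt_lt_R0, Rmult_lt_0_compat; lra).
      apply Rgt_not_eq; unfold Rdiv; rewrite Rinv_1; lra. }
  intros i j; apply (Hdiag (S N)); lia.
Qed.

Lemma sqrt_factR_shift a b k :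
  sqrt (factR a * factR b) * sqrt (factR (a + k) / factR a) * sqrt (factR (b + k) / factR b)
  = sqrt (factR (a + k) * factR (b + k)).
Proof.
  pose proof (factR_pos a); pose proof (factR_pos b).
  pose proof (factR_pos (a + k)); pose proof (factR_pos (b + k)).
  rewrite <- !sqrt_mult_alt.
  all: try (f_equal; field; repeat split; lra).
  all: unfold Rdiv; repeat apply Rmult_le_pos; try apply Rlt_le, Rinv_0_lt_compat; lra.
Qed.

Lemma sqrt_pow_shift t i j l : 0 <= t ->
  sqrt t ^ (i + l) * sqrt t ^ (j + l) = sqrt t ^ (i + j) * t ^ l.
Proof.
  intros Ht; rewrite !pow_add.
  replace (t ^ l) with ((sqrt t * sqrt t) ^ l) by (rewrite sqrt_sqrt; auto).
  rewrite Rpow_mult_distr; ring.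
Qed.

(* The coefficient of x^n in e^(-t x) e^((t-1) x) = e^(-x). *)
Lemma exp_coef_convolution t n :
  sum_f_R0 (fun l => (-1) ^ l / factR l * t ^ l * ((t - 1) ^ (n - l) / factR (n - l))) n
  = (-1) ^ n / factR n.
Proof.
  pose proof (binomial (- t) (t - 1) n) as Hb.
  replace (- t + (t - 1)) with (-1) in Hb by ring.
  unfold Rdiv at 3; rewrite Hb, Rmult_comm, scal_sum; apply sum_eq; intros l Hl.
  unfold Binomial.C, factR.
  pose proof (INR_fact_lt_0 l); pose proof (INR_fact_lt_0 (n - l)); pose proof (INR_fact_lt_0 n).
  replace (- t) with (-1 * t) by ring; rewrite Rpow_mult_distr; field; repeat split; lra.
Qed.

Lemma wcoef_Vertigo N t A i j : bounded_support N A -> 0 <= t ->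
  wcoef N (Vertigo N t A) i j = (RtoC (sqrt t ^ (i + j)) * wcoef N A i j)%C.
Proof.
  intros hs Ht; unfold wcoef, Vertigo.
  set (g := fun n => (RtoC (sqrt (factR (i + n) * factR (j + n))) * A (i + n)%nat (j + n)%nat)%C).
  set (h := fun l k => RtoC ((-1) ^ l / factR l * t ^ l * ((t - 1) ^ k / factR k)
                             * sqrt t ^ (i + j))).
  transitivity (Csum (fun l => Csum (fun k => (h l k * g (l + k)%nat)%C) N) N).
  { apply Csum_ext; intros l Hl; rewrite Csum_mult_l; apply Csum_ext; intros k Hk.
    unfold g, h; rewrite !Nat.add_assoc, !Cmult_assoc, <- !RtoC_mult.
    rewrite <- (sqrt_factR_shift (i + l) (j + l) k).
    do 2 f_equal.
    transitivity ((t - 1) ^ k / factR k * (sqrt t ^ (i + l) * sqrt t ^ (j + l))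
                  * ((-1) ^ l / factR l * sqrt (factR (i + l) * factR (j + l))
                     * sqrt (factR (i + l + k) / factR (i + l))
                     * sqrt (factR (j + l + k) / factR (j + l)))); [ring|].
    rewrite sqrt_pow_shift by exact Ht; ring. }
  rewrite Csum_cauchy by (intros n Hn; unfold g; rewrite hs by lia; ring).
  rewrite Csum_mult_l; apply Csum_ext; intros n Hn; unfold h.
  rewrite Csum_RtoC, <- scal_sum, exp_coef_convolution; unfold g.
  rewrite !Cmult_assoc, <- !RtoC_mult; do 2 f_equal; ring.
Qed.

Lemma Vertigo_bounded_support N t A : bounded_support N A -> bounded_support N (Vertigo N t A).
Proof. intros hs i j Hij; apply Csum_eq0; intros k Hk; rewrite hs by lia; ring. Qed.

Definition wcoef_homogeneous (N : nat) (A : Op) (m : nat) : Prop :=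
  forall i j, (i + j <> m)%nat -> wcoef N A i j = RtoC 0.

Lemma Vertigo_homogeneous N A m t : bounded_support N A -> wcoef_homogeneous N A m -> 0 <= t ->
  forall i j, Vertigo N t A i j = (RtoC (sqrt t ^ m) * A i j)%C.
Proof.
  intros hs hm Ht.
  set (B := fun a b => (Vertigo N t A a b + - RtoC (sqrt t ^ m) * A a b)%C).
  assert (HB : forall i j, B i j = RtoC 0).
  { apply (wcoef_eq0 N).
    - intros i j Hij; unfold B.
      rewrite (Vertigo_bounded_support N t A hs i j Hij), hs by exact Hij; ring.
    - intros i j; unfold B; rewrite wcoef_lin, wcoef_Vertigo by assumption.
      destruct (Nat.eq_dec (i + j) m) as [<-|E]; [ring|rewrite hm by exact E; ring]. }
  intros i j; specialize (HB i j).
  replace (Vertigo N t A i j) with (B i j + RtoC (sqrt t ^ m) * A i j)%C by (unfold B; ring).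
  rewrite HB; ring.
Qed.

Lemma eigenvector_homogeneous N A t : bounded_support N A -> (exists i j, A i j <> RtoC 0) ->
  1 < t -> is_eigenvector N t A -> exists m, wcoef_homogeneous N A m.
Proof.
  intros hs [i0 [j0 Hnz]] Ht [lam Hlam].
  assert (Hsome : exists a b, wcoef N A a b <> RtoC 0).
  { apply NNPP; intro Hn; apply Hnz, (wcoef_eq0 N A hs); intros a b.
    apply NNPP; intro Hab; apply Hn; exists a, b; exact Hab. }
  destruct Hsome as [a [b Hab]].
  assert (Hscale : forall i j, wcoef N A i j <> RtoC 0 -> RtoC (sqrt t ^ (i + j)) = lam).
  { intros i j Hij.
    assert (E : (RtoC (sqrt t ^ (i + j)) * wcoef N A i j)%C = (lam * wcoef N A i j)%C).
    { rewrite <- wcoef_Vertigo by (auto; lra).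
      rewrite (wcoef_ext N _ (fun a b => (lam * A a b)%C)) by (intros; apply Hlam).
      unfold wcoef; rewrite Csum_mult_l; apply Csum_ext; intros; ring. }
    apply (f_equal (fun z => (z / wcoef N A i j)%C)) in E.
    field_simplify in E; assumption. }
  assert (Hst : 1 < sqrt t) by (rewrite <- sqrt_1; apply sqrt_lt_1; lra).
  exists (a + b)%nat; intros i j Hij; apply NNPP; intro Hw.
  pose proof (RtoC_inj _ _ (eq_trans (Hscale i j Hw) (eq_sym (Hscale a b Hab)))) as E.
  destruct (Nat.lt_total (i + j) (a + b)) as [L|[L|L]];
    [pose proof (Rlt_pow _ _ _ Hst L) | lia | pose proof (Rlt_pow _ _ _ Hst L)]; lra.
Qed.

(** * Matrix elements of the displacement operator *)

Lemma Cmod_neg_conj a : Cmod (- Cconj a)%C = Cmod a.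
Proof. rewrite Cmod_opp, Cmod_conj; reflexivity. Qed.

Lemma neg_conj_involutive a : (- Cconj (- Cconj a))%C = a.
Proof. rewrite Copp_conj, Cconj_conj; ring. Qed.

Lemma Dmat_swap a j k : Dmat a j k = Dmat (- Cconj a)%C k j.
Proof.
  unfold Dmat; rewrite Cmod_neg_conj, Nat.min_comm; f_equal; apply Csum_ext; intros l Hl.
  rewrite neg_conj_involutive, (Rmult_comm (factR k)).
  replace (factR l * factR (k - l) * factR (j - l))
    with (factR l * factR (j - l) * factR (k - l)) by ring; ring.
Qed.

Definition dpoly_term (a : C) (j k l : nat) : C :=
  if Nat.leb l k then
    (RtoC (/ (factR l * factR (j - l) * factR (k - l)))
     * (a ^ (j - l) * (- Cconj a) ^ (k - l)))%C
  else RtoC 0.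

Definition dpoly (a : C) (j k : nat) : C := Csum (dpoly_term a j k) j.

Lemma Dmat_dpoly a j k :
  Dmat a j k = (RtoC (exp (- (Cmod a ^ 2) / 2) * sqrt (factR j * factR k)) * dpoly a j k)%C.
Proof.
  unfold Dmat, dpoly; change Defs.Cpow with Cpow.
  rewrite RtoC_mult, <- Cmult_assoc; f_equal; rewrite Csum_mult_l.
  assert (Hterm : forall l, (l <= Nat.min j k)%nat ->
    (a ^ (j - l) * (- Cconj a) ^ (k - l) *
     RtoC (sqrt (factR j * factR k) / (factR l * factR (j - l) * factR (k - l))))%C
    = (RtoC (sqrt (factR j * factR k)) * dpoly_term a j k l)%C).
  { intros l Hl; unfold dpoly_term; destruct (Nat.leb_spec l k); [|lia].
    unfold Rdiv; rewrite RtoC_mult; ring. }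
  destruct (Nat.le_ge_cases j k) as [H|H].
  - replace (Nat.min j k) with j by lia; apply Csum_ext; intros l Hl; apply Hterm; lia.
  - replace (Nat.min j k) with k by lia.
    rewrite (Csum_ext _ _ k (fun l Hl => Hterm l ltac:(lia))), (Csum_extend _ k j H);
      [reflexivity|].
    intros l Hl; unfold dpoly_term; destruct (Nat.leb_spec l k); [lia|ring].
Qed.

Lemma dpoly_term_row a j k l : (l <= j)%nat ->
  (RtoC (INR (S j - l)) * dpoly_term a (S j) k l)%C = (a * dpoly_term a j k l)%C.
Proof.
  intros Hl; unfold dpoly_term; destruct (Nat.leb l k); [|ring].
  replace (S j - l)%nat with (S (j - l)) by lia; rewrite factR_S, Cpow_S.
  pose proof (factR_pos l); pose proof (factR_pos (j - l)); pose proof (factR_pos (k - l)).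
  pose proof (lt_0_INR (S (j - l)) ltac:(lia)).
  rewrite !Cmult_assoc, <- RtoC_mult.
  replace (INR (S (j - l)) * / (factR l * (INR (S (j - l)) * factR (j - l)) * factR (k - l)))
    with (/ (factR l * factR (j - l) * factR (k - l))) by (field; repeat split; lra).
  ring.
Qed.

Lemma dpoly_term_diag a j k l :
  (RtoC (INR (S l)) * dpoly_term a (S j) (S k) (S l))%C = dpoly_term a j k l.
Proof.
  unfold dpoly_term; simpl Nat.leb; destruct (Nat.leb l k); [|ring].
  simpl Nat.sub; rewrite factR_S, Cmult_assoc, <- RtoC_mult.
  pose proof (factR_pos l); pose proof (factR_pos (j - l)); pose proof (factR_pos (k - l)).
  pose proof (lt_0_INR (S l) ltac:(lia)).
  do 3 f_equal; field; repeat split; lra.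
Qed.

(* Split the weight j + 1 as (j + 1 - l) + l: the first part lowers the row
   index, the second part lowers both indices. *)
Lemma dpoly_rec a j k :
  (RtoC (INR (S j)) * dpoly a (S j) k)%C =
  ((match k with O => RtoC 0 | S k' => dpoly a j k' end) + a * dpoly a j k)%C.
Proof.
  unfold dpoly; rewrite Csum_mult_l.
  rewrite (Csum_ext _ (fun l => (RtoC (INR (S j - l)) * dpoly_term a (S j) k l
                                 + RtoC (INR l) * dpoly_term a (S j) k l)%C)).
  2:{ intros l Hl; rewrite <- Cmult_plus_distr_r, <- RtoC_plus, <- plus_INR.
      replace (S j - l + l)%nat with (S j) by lia; reflexivity. }
  rewrite Csum_plus, (Csum_extend _ j (S j)) by
    (lia || (intros l Hl; replace (S j - l)%nat with O by lia; simpl INR; ring)).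
  rewrite (Csum_ext _ (fun l => (a * dpoly_term a j k l)%C) j)
    by (intros; apply dpoly_term_row; lia).
  rewrite <- Csum_mult_l, Csum_shift, Cmult_0_l, Cplus_0_l, Cplus_comm; f_equal.
  destruct k as [|k].
  - apply Csum_eq0; intros l _; unfold dpoly_term; simpl Nat.leb; apply Cmult_0_r.
  - apply Csum_ext; intros l _; apply dpoly_term_diag.
Qed.

Lemma sqrt_INR_factR j k :
  sqrt (INR (S j)) * sqrt (factR (S j) * factR k) = INR (S j) * sqrt (factR j * factR k).
Proof.
  pose proof (lt_0_INR (S j) ltac:(lia)); pose proof (factR_pos j); pose proof (factR_pos k).
  rewrite factR_S, Rmult_assoc, sqrt_mult_alt by lra.
  rewrite <- Rmult_assoc, sqrt_sqrt by lra; reflexivity.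
Qed.

Lemma Dmat_rec_row a j k :
  (RtoC (sqrt (INR (S j))) * Dmat a (S j) k)%C =
  (RtoC (sqrt (INR k)) * Dmat a j (k - 1) + a * Dmat a j k)%C.
Proof.
  rewrite !Dmat_dpoly; set (E := exp (- (Cmod a ^ 2) / 2)).
  transitivity (RtoC (E * sqrt (factR j * factR k)) * (RtoC (INR (S j)) * dpoly a (S j) k))%C.
  { rewrite !Cmult_assoc, <- !RtoC_mult; do 2 f_equal.
    transitivity (E * (sqrt (INR (S j)) * sqrt (factR (S j) * factR k))); [ring|].
    rewrite sqrt_INR_factR; ring. }
  rewrite dpoly_rec; destruct k as [|k].
  - simpl INR; rewrite sqrt_0; ring.
  - rewrite Nat.sub_succ, Nat.sub_0_r.
    assert (Hs : sqrt (INR (S k)) * sqrt (factR j * factR k) = sqrt (factR j * factR (S k))).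
    { pose proof (lt_0_INR (S k) ltac:(lia)); pose proof (factR_pos j); pose proof (factR_pos k).
      rewrite <- sqrt_mult_alt, factR_S by lra; f_equal; ring. }
    rewrite <- Hs, !RtoC_mult; ring.
Qed.

Lemma Dmat_rec_col a i k :
  (RtoC (sqrt (INR (S k))) * Dmat a i (S k))%C =
  (RtoC (sqrt (INR i)) * Dmat a (i - 1) k - Cconj a * Dmat a i k)%C.
Proof. rewrite !(Dmat_swap a), Dmat_rec_row; ring. Qed.

Lemma Dmat_row0 a k :
  Dmat a 0 k = (RtoC (exp (- (Cmod a ^ 2) / 2) / sqrt (factR k)) * (- Cconj a) ^ k)%C.
Proof.
  rewrite Dmat_dpoly; unfold dpoly, dpoly_term; cbn [Csum Nat.leb].
  rewrite !Nat.sub_0_r, factR_0, Cmult_1_l, Cmult_assoc, <- RtoC_mult.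
  pose proof (factR_pos k) as Hk; pose proof (sqrt_lt_R0 _ Hk).
  do 2 f_equal; rewrite !Rmult_1_l.
  replace (/ factR k) with (/ sqrt (factR k) * / sqrt (factR k))
    by (rewrite <- Rinv_mult, sqrt_sqrt; lra).
  field; lra.
Qed.

Lemma Dmat_col0 a k :
  Dmat a k 0 = (RtoC (exp (- (Cmod a ^ 2) / 2) / sqrt (factR k)) * a ^ k)%C.
Proof.
  rewrite Dmat_swap, Dmat_row0, Cmod_neg_conj, neg_conj_involutive; reflexivity.
Qed.

(** * The Wigner function as a polynomial in α and conj α *)

Local Notation is_Cseries := (is_series (V := C_NormedModule)).

Lemma sum_n_fst (a : nat -> C) n :
  fst (sum_n (G := C_AbelianMonoid) a n) = sum_n (fun k => fst (a k)) n.
Proof.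
  induction n as [|n IH]; [rewrite !sum_O | rewrite !sum_Sn, <- IH]; reflexivity.
Qed.

Lemma sum_n_snd (a : nat -> C) n :
  snd (sum_n (G := C_AbelianMonoid) a n) = sum_n (fun k => snd (a k)) n.
Proof.
  induction n as [|n IH]; [rewrite !sum_O | rewrite !sum_Sn, <- IH]; reflexivity.
Qed.

Lemma is_Cseries_fst (a : nat -> C) (l : C) :
  is_Cseries a l -> is_series (fun n => fst (a n)) (fst l).
Proof.
  intros H; unfold is_series in *.
  apply filterlim_ext with (f := fun n => fst (sum_n (G := C_AbelianMonoid) a n));
    [apply sum_n_fst|].
  intros P [eps HP]; apply (H (fun z => P (fst z))); exists eps; intros y Hy; apply HP, Hy.
Qed.

Lemma is_Cseries_snd (a : nat -> C) (l : C) :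
  is_Cseries a l -> is_series (fun n => snd (a n)) (snd l).
Proof.
  intros H; unfold is_series in *.
  apply filterlim_ext with (f := fun n => snd (sum_n (G := C_AbelianMonoid) a n));
    [apply sum_n_snd|].
  intros P [eps HP]; apply (H (fun z => P (snd z))); exists eps; intros y Hy; apply HP, Hy.
Qed.

Lemma is_Cseries_pair (a : nat -> C) (l1 l2 : R) :
  is_series (fun n => fst (a n)) l1 -> is_series (fun n => snd (a n)) l2 -> is_Cseries a (l1, l2).
Proof.
  intros H1 H2; unfold is_series in *; intros P [eps HP].
  pose proof (H1 _ (locally_ball l1 eps)) as E1; pose proof (H2 _ (locally_ball l2 eps)) as E2.
  unfold filtermap in E1, E2 |- *; generalize (filter_and _ _ E1 E2); apply filter_imp.
  intros n [B1 B2]; apply HP; split; [rewrite sum_n_fst | rewrite sum_n_snd]; assumption.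
Qed.

Lemma is_series_R0 : is_series (fun _ : nat => 0) 0.
Proof.
  apply filterlim_ext with (f := fun _ => 0); [|apply filterlim_const].
  intros n; induction n as [|n IH]; [rewrite sum_O | rewrite sum_Sn, <- IH];
    simpl; unfold plus; simpl; ring.
Qed.

Lemma is_Cseries_RtoC (f : nat -> R) (l : R) :
  is_series f l -> is_Cseries (fun n => RtoC (f n)) (RtoC l).
Proof. intros H; apply is_Cseries_pair; [exact H | exact is_series_R0]. Qed.

Lemma is_Cseries_conj (a : nat -> C) (l : C) :
  is_Cseries a l -> is_Cseries (fun n => Cconj (a n)) (Cconj l).
Proof.
  intros H; apply is_Cseries_pair.
  - exact (is_Cseries_fst _ _ H).
  - exact (is_series_opp (V := R_NormedModule) _ _ (is_Cseries_snd _ _ H)).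
Qed.

Lemma is_Cseries_plus (a b : nat -> C) (la lb : C) :
  is_Cseries a la -> is_Cseries b lb -> is_Cseries (fun n => (a n + b n)%C) (la + lb)%C.
Proof. intros Ha Hb; exact (is_series_plus a b la lb Ha Hb). Qed.

Lemma is_Cseries_scal (c : C) (a : nat -> C) (l : C) :
  is_Cseries a l -> is_Cseries (fun n => (c * a n)%C) (c * l)%C.
Proof. intros H; exact (is_series_scal c a l H). Qed.

Lemma is_Cseries_ext (a b : nat -> C) (l l' : C) :
  (forall n, a n = b n) -> l = l' -> is_Cseries a l -> is_Cseries b l'.
Proof. intros H <-; apply is_series_ext, H. Qed.

Lemma is_Cseries_Csum (f : nat -> nat -> C) (l : nat -> C) m :
  (forall i, (i <= m)%nat -> is_Cseries (f i) (l i)) ->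
  is_Cseries (fun k => Csum (fun i => f i k) m) (Csum l m).
Proof.
  induction m as [|m IH]; intros H; simpl; [apply H; lia|].
  apply is_Cseries_plus; [apply IH; intros; apply H | apply H]; lia.
Qed.

Lemma is_Cseries_shift (a : nat -> C) (l : C) :
  a O = RtoC 0 -> is_Cseries (fun k => a (S k)) l -> is_Cseries a l.
Proof.
  intros H0 H; apply is_series_decr_1; rewrite H0.
  match goal with |- is_series _ ?x => replace x with l; [exact H|] end.
  change (l = (l + - RtoC 0)%C); destruct l; apply injective_projections; simpl; ring.
Qed.

Definition parity_term (a : C) (j i k : nat) : C :=
  (Dmat a j k * (RtoC ((-1) ^ k) * Cconj (Dmat a i k)))%C.

Definition parity_elem (a : C) (j i : nat) : C :=
  (RtoC ((-1) ^ i) * Dmat (RtoC 2 * a) j i)%C.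

Lemma pow_neg1_sqr n : (-1) ^ n * (-1) ^ n = 1.
Proof. rewrite <- Rpow_mult_distr; replace (-1 * -1) with 1 by ring; apply pow1. Qed.

Lemma RtoC_m1 : RtoC (-1) = (- RtoC 1)%C.
Proof. apply injective_projections; simpl; ring. Qed.

Lemma Cmod_double a : Cmod (RtoC 2 * a) ^ 2 = 4 * Cmod a ^ 2.
Proof. rewrite Cmod_mult, Cmod_R, Rabs_pos_eq by lra; ring. Qed.

Lemma parity_elem_rec a j i :
  (RtoC (sqrt (INR (S j))) * parity_elem a (S j) i)%C =
  (- RtoC (sqrt (INR i)) * parity_elem a j (i - 1) + RtoC 2 * a * parity_elem a j i)%C.
Proof.
  unfold parity_elem.
  transitivity (RtoC ((-1) ^ i)
                * (RtoC (sqrt (INR (S j))) * Dmat (RtoC 2 * a) (S j) i))%C; [ring|].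
  rewrite Dmat_rec_row; destruct i as [|i].
  - simpl INR; rewrite sqrt_0; ring.
  - rewrite Nat.sub_succ, Nat.sub_0_r; simpl pow; rewrite RtoC_mult, RtoC_m1; ring.
Qed.

Lemma is_series_parity_00 a : is_Cseries (parity_term a 0 0) (parity_elem a 0 0).
Proof.
  set (x := Cmod a ^ 2); set (E := exp (- x / 2)).
  pose proof (proj1 (is_pseries_R _ _ _) (is_exp_Reals (- x))) as Hexp.
  apply is_Cseries_RtoC, (is_Cseries_scal (RtoC (E * E))) in Hexp.
  refine (is_Cseries_ext _ _ _ _ _ _ Hexp).
  - intros k; unfold parity_term; rewrite !Dmat_row0, Cmult_conj, Cpow_conj, Cconj_RtoC.
    transitivity (RtoC (E / sqrt (factR k) * (E / sqrt (factR k)) * (-1) ^ k)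
                  * ((- Cconj a) * Cconj (- Cconj a)) ^ k)%C.
    2:{ fold x E; rewrite Cpow_mult_l, !RtoC_mult; ring. }
    rewrite <- Cmod2_conj, Cmod_neg_conj, <- RtoC_pow, <- !RtoC_mult; f_equal; fold x.
    pose proof (factR_pos k) as Hk; pose proof (sqrt_lt_R0 _ Hk).
    replace ((- x) ^ k) with ((-1) ^ k * x ^ k) by (rewrite <- Rpow_mult_distr; f_equal; ring).
    change (INR (Factorial.fact k)) with (factR k); rewrite <- (sqrt_sqrt (factR k)) at 1 by lra.
    field; lra.
  - unfold parity_elem; rewrite Dmat_row0, Cmod_double; simpl; rewrite factR_0, sqrt_1.
    rewrite <- RtoC_mult, Cmult_1_l, Cmult_1_r; f_equal.
    unfold E; rewrite <- !exp_plus, Rdiv_1; f_equal; unfold x; field.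
Qed.

(* Shifting k by one trades the factor sqrt k of [Dmat_rec_row] for the
   column recurrence [Dmat_rec_col] of the conjugated factor. *)
Lemma is_series_parity_lowered a j i :
  is_Cseries (parity_term a j i) (parity_elem a j i) ->
  is_Cseries (parity_term a j (i - 1)) (parity_elem a j (i - 1)) ->
  is_Cseries (fun k => (RtoC (sqrt (INR k)) * Dmat a j (k - 1)
                        * (RtoC ((-1) ^ k) * Cconj (Dmat a i k)))%C)
             (- RtoC (sqrt (INR i)) * parity_elem a j (i - 1) + a * parity_elem a j i)%C.
Proof.
  intros Hi Hi1; apply is_Cseries_shift; [simpl INR; rewrite sqrt_0; ring|].
  apply (is_Cseries_scal (- RtoC (sqrt (INR i)))) in Hi1; apply (is_Cseries_scal a) in Hi.
  refine (is_Cseries_ext _ _ _ _ _ eq_refl (is_Cseries_plus _ _ _ _ Hi1 Hi)).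
  intros k; unfold parity_term; rewrite Nat.sub_succ, Nat.sub_0_r.
  transitivity (Dmat a j k * RtoC (-1 * (-1) ^ k)
                * Cconj (RtoC (sqrt (INR (S k))) * Dmat a i (S k)))%C.
  2:{ rewrite Cmult_conj, Cconj_RtoC; simpl pow; ring. }
  rewrite Dmat_rec_col, Cminus_conj, !Cmult_conj, Cconj_conj, !Cconj_RtoC, RtoC_mult, RtoC_m1.
  ring.
Qed.

Lemma is_series_parity_step a j i :
  is_Cseries (parity_term a j i) (parity_elem a j i) ->
  is_Cseries (parity_term a j (i - 1)) (parity_elem a j (i - 1)) ->
  is_Cseries (parity_term a (S j) i) (parity_elem a (S j) i).
Proof.
  intros Hi Hi1.
  set (s := RtoC (sqrt (INR (S j)))).
  assert (Hs : s <> RtoC 0).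
  { apply RtoC_neq0, Rgt_not_eq, sqrt_lt_R0, lt_0_INR; lia. }
  pose proof (is_Cseries_plus _ _ _ _ (is_series_parity_lowered a j i Hi Hi1)
                (is_Cseries_scal a _ _ Hi)) as H.
  apply (is_Cseries_scal (/ s)) in H; refine (is_Cseries_ext _ _ _ _ _ _ H).
  - intros k; unfold parity_term.
    transitivity (/ s * (s * Dmat a (S j) k) * (RtoC ((-1) ^ k) * Cconj (Dmat a i k)))%C.
    + unfold s; rewrite Dmat_rec_row; ring.
    + field; exact Hs.
  - transitivity (/ s * (s * parity_elem a (S j) i))%C.
    + unfold s; rewrite parity_elem_rec; ring.
    + field; exact Hs.
Qed.

(* Fock matrix elements of the operator identity D(α) (-1)^n D(α)† = D(2α) (-1)^n. *)
Lemma is_series_parity a j i : is_Cseries (parity_term a j i) (parity_elem a j i).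
Proof.
  assert (Hcol : forall n, is_Cseries (parity_term a n 0) (parity_elem a n 0)).
  { intros n; induction n as [|n IH];
      [apply is_series_parity_00 | apply is_series_parity_step; exact IH]. }
  assert (Hrow : forall n, is_Cseries (parity_term a 0 n) (parity_elem a 0 n)).
  { intros n; refine (is_Cseries_ext _ _ _ _ _ _ (is_Cseries_conj _ _ (Hcol n))).
    - intros k; unfold parity_term; rewrite !Cmult_conj, Cconj_conj, Cconj_RtoC; ring.
    - unfold parity_elem; rewrite Dmat_row0, Dmat_col0, !Cmult_conj, !Cconj_RtoC, Cpow_conj.
      rewrite Cmult_conj, Cconj_RtoC, pow_O, Cmult_1_l.
      replace (- (RtoC 2 * Cconj a))%C with (RtoC (-1) * (RtoC 2 * Cconj a))%C
        by (rewrite RtoC_m1; ring).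
      rewrite (Cpow_mult_l (RtoC (-1))), <- (RtoC_pow (-1)).
      match goal with |- ?L = _ => transitivity (RtoC ((-1) ^ n * (-1) ^ n) * L)%C end.
      + rewrite pow_neg1_sqr; ring.
      + rewrite RtoC_mult; ring. }
  revert i; induction j as [|j IH]; intros i; [apply Hrow | apply is_series_parity_step; apply IH].
Qed.

Lemma Wigner_parity_sum N A a :
  Wigner N A a
  = (RtoC (2 / PI) * Csum (fun i => Csum (fun j => (A i j * parity_elem a j i)%C) N) N)%C.
Proof.
  set (S := Csum (fun i => Csum (fun j => (A i j * parity_elem a j i)%C) N) N).
  assert (H : is_Cseries (wigner_term N A a) S).
  { refine (is_Cseries_ext _ _ _ _ _ eq_refl _).
    2:{ apply is_Cseries_Csum; intros i Hi; apply is_Cseries_Csum; intros j Hj.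
        apply is_Cseries_scal, is_series_parity. }
    intros k; apply Csum_ext; intros i Hi; apply Csum_ext; intros j Hj.
    unfold parity_term; ring. }
  unfold Wigner; f_equal.
  rewrite (is_series_unique _ _ (is_Cseries_fst _ _ H)).
  rewrite (is_series_unique _ _ (is_Cseries_snd _ _ H)).
  destruct S; reflexivity.
Qed.

Definition bipoly (M : nat) (c : nat -> nat -> C) (a : C) : C :=
  Csum (fun p => Csum (fun q => (c p q * (a ^ p * Cconj a ^ q))%C) M) M.

Definition wigner_weight (p q : nat) : R := 2 / PI * (2 ^ (p + q) / (factR p * factR q)).

Definition wigner_coef (N : nat) (A : Op) (p q : nat) : C :=
  (RtoC (wigner_weight p q) * wcoef N A q p)%C.

Lemma wigner_weight_pos p q : 0 < wigner_weight p q.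
Proof.
  pose proof (factR_pos p); pose proof (factR_pos q); pose proof PI_RGT_0.
  apply Rmult_lt_0_compat; apply Rdiv_lt_0_compat; try lra.
  - apply pow_lt; lra.
  - apply Rmult_lt_0_compat; lra.
Qed.

Lemma wigner_weight_sym p q : wigner_weight p q = wigner_weight q p.
Proof. unfold wigner_weight; rewrite Nat.add_comm, (Rmult_comm (factR p)); reflexivity. Qed.

Lemma wigner_weight_expansion p q l :
  2 / PI * ((-1) ^ (q + l) * 2 ^ p * (-2) ^ q
            * (sqrt (factR (p + l) * factR (q + l)) / (factR l * factR p * factR q)))
  = wigner_weight p q * ((-1) ^ l / factR l * sqrt (factR (q + l) * factR (p + l))).
Proof.
  unfold wigner_weight; replace (-2) with (-1 * 2) by ring.
  rewrite Rpow_mult_distr, !pow_add, (Rmult_comm (factR (q + l))).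
  replace ((-1) ^ q * (-1) ^ l * 2 ^ p * ((-1) ^ q * 2 ^ q))
    with ((-1) ^ q * (-1) ^ q * (-1) ^ l * 2 ^ p * 2 ^ q) by ring.
  rewrite pow_neg1_sqr.
  pose proof (factR_pos l); pose proof (factR_pos p); pose proof (factR_pos q); pose proof PI_RGT_0.
  field; repeat split; lra.
Qed.

Lemma parity_sum_bipoly N A a : bounded_support N A ->
  (RtoC (2 / PI) * Csum (fun i => Csum (fun j => (A i j * parity_elem a j i)%C) N) N)%C
  = (bipoly N (wigner_coef N A) a * RtoC (exp (-2 * Cmod a ^ 2)))%C.
Proof.
  intros hs; unfold parity_elem, Dmat; change Defs.Cpow with Cpow.
  set (b := (RtoC 2 * a)%C).
  replace (exp (- (Cmod b ^ 2) / 2)) with (exp (-2 * Cmod a ^ 2))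
    by (unfold b; rewrite Cmod_double; f_equal; field).
  rewrite Csum_mult_l.
  rewrite (Csum_ext _ (fun i => Csum (fun j => Csum (fun l =>
     (RtoC (exp (-2 * Cmod a ^ 2) * (2 / PI)) * (A i j * RtoC ((-1) ^ i) *
      (b ^ (j - l) * (- Cconj b) ^ (i - l) *
       RtoC (sqrt (factR j * factR i) / (factR l * factR (j - l) * factR (i - l))))))%C)
     (Nat.min j i)) N) N).
  2:{ intros i Hi; rewrite Csum_mult_l; apply Csum_ext; intros j Hj.
      match goal with |- (_ * (_ * (_ * (_ * Csum ?f _))))%C = _ =>
        transitivity (RtoC (exp (-2 * Cmod a ^ 2) * (2 / PI)) * A i j * RtoC ((-1) ^ i)
                      * Csum f (Nat.min j i))%C end.
      - rewrite RtoC_mult; ring.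
      - rewrite Csum_mult_l; apply Csum_ext; intros l Hl; ring. }
  rewrite Csum_triangle by (intros i j l [H|H]; rewrite hs by lia; ring).
  unfold bipoly; rewrite Csum_mult_r; apply Csum_ext; intros p Hp.
  rewrite Csum_mult_r; apply Csum_ext; intros q Hq.
  unfold wigner_coef, wcoef; rewrite !Csum_mult_l, !Csum_mult_r; apply Csum_ext; intros l Hl.
  rewrite !Nat.add_sub.
  unfold b; rewrite Cmult_conj, Cconj_RtoC.
  replace (- (RtoC 2 * Cconj a))%C with (RtoC (-2) * Cconj a)%C
    by (apply injective_projections; simpl; ring).
  rewrite !Cpow_mult_l, <- !RtoC_pow.
  transitivity (RtoC (exp (-2 * Cmod a ^ 2) * (2 / PI * ((-1) ^ (q + l) * 2 ^ p * (-2) ^ q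
     * (sqrt (factR (p + l) * factR (q + l)) / (factR l * factR p * factR q)))))
     * (A (q + l)%nat (p + l)%nat * (a ^ p * Cconj a ^ q)))%C.
  { rewrite !RtoC_mult; ring. }
  rewrite wigner_weight_expansion, !RtoC_mult; ring.
Qed.

Lemma Wigner_bipoly N A a : bounded_support N A ->
  Wigner N A a = (bipoly N (wigner_coef N A) a * RtoC (exp (-2 * Cmod a ^ 2)))%C.
Proof. intros hs; rewrite Wigner_parity_sum; apply parity_sum_bipoly, hs. Qed.

(** * Polynomials vanishing on C *)

Definition cpoly (d : nat) (r : nat -> C) (z : C) : C := Csum (fun e => (r e * z ^ e)%C) d.

Lemma cpoly_S d r z : cpoly (S d) r z = (r O + z * cpoly d (fun e => r (S e)) z)%C.
Proof.
  unfold cpoly; rewrite Csum_shift, Csum_mult_l; simpl Cpow.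
  f_equal; [ring | apply Csum_ext; intros; ring].
Qed.

Lemma cpoly_factor d r z0 : exists q, q d = r (S d) /\
  forall z, (cpoly (S d) r z - cpoly (S d) r z0)%C = ((z - z0) * cpoly d q z)%C.
Proof.
  revert r; induction d as [|d IH]; intros r.
  - exists (fun _ => r 1%nat); split; [reflexivity|]; intros z; unfold cpoly; simpl; ring.
  - destruct (IH (fun e => r (S e))) as [q [Hqd Hq]].
    set (P := cpoly (S d) (fun e => r (S e))).
    set (Q := fun e => match e with O => P z0 | S e => q e end).
    exists Q; split; [exact Hqd|]; intros z.
    rewrite !(cpoly_S (S d) r), (cpoly_S d Q z); fold (P z) (P z0).
    change (Q O) with (P z0); change (fun e => Q (S e)) with q.
    replace (P z) with (P z0 + (z - z0) * cpoly d q z)%C by (rewrite <- Hq; unfold P; ring).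
    ring.
Qed.

Lemma cpoly_roots_coef_eq0 d r (pts : nat -> C) :
  (forall k k', pts k = pts k' -> k = k') -> (forall k, cpoly d r (pts k) = RtoC 0) ->
  forall e, (e <= d)%nat -> r e = RtoC 0.
Proof.
  revert r pts; induction d as [|d IH]; intros r pts Hinj Hroot e He.
  - replace e with O by lia; rewrite <- (Hroot O); unfold cpoly; simpl; ring.
  - destruct (cpoly_factor d r (pts O)) as [q [Hqd Hq]].
    assert (Hq0 : forall e, (e <= d)%nat -> q e = RtoC 0).
    { apply (IH q (fun k => pts (S k))); [intros k k' E; apply Hinj in E; lia|].
      intros k.
      assert (Hne : (pts (S k) - pts O)%C <> RtoC 0).
      { intros E; assert (S k = O) by (apply Hinj; rewrite <- (Cplus_0_l (pts O)), <- E; ring).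
        lia. }
      apply (Cmult_eq0_cancel_l _ _ Hne); rewrite <- Hq, !Hroot; ring. }
    assert (Htop : r (S d) = RtoC 0) by (rewrite <- Hqd; apply Hq0; lia).
    destruct (Nat.eq_dec e (S d)) as [->|E]; [exact Htop|].
    apply (IH r pts Hinj); [|lia].
    intros k; rewrite <- (Hroot k); unfold cpoly; simpl; rewrite Htop; ring.
Qed.

Definition bipoly_hom (M : nat) (c : nat -> nat -> C) (d : nat) (a : C) : C :=
  Csum (fun p => Csum (fun q =>
    if Nat.eqb d (p + q) then (c p q * (a ^ p * Cconj a ^ q))%C else RtoC 0) M) M.

Lemma bipoly_scale M c s a :
  bipoly M c (RtoC s * a) = cpoly (M + M) (fun d => bipoly_hom M c d a) (RtoC s).
Proof.
  unfold cpoly, bipoly_hom, bipoly; symmetry.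
  rewrite (Csum_ext _ (fun d => Csum (fun p => Csum (fun q =>
    if Nat.eqb d (p + q) then (c p q * (a ^ p * Cconj a ^ q) * RtoC s ^ d)%C else RtoC 0)
    M) M) (M + M)).
  2:{ intros d _; rewrite Csum_mult_r; apply Csum_ext; intros p _; rewrite Csum_mult_r.
      apply Csum_ext; intros q _; destruct (Nat.eqb d (p + q)); ring. }
  rewrite Csum_swap; apply Csum_ext; intros p Hp; rewrite Csum_swap; apply Csum_ext; intros q Hq.
  rewrite (Csum_delta (fun d => (c p q * (a ^ p * Cconj a ^ q) * RtoC s ^ d)%C)).
  destruct (Nat.leb_spec (p + q) (M + M)); [|lia].
  rewrite Cmult_conj, Cconj_RtoC, !Cpow_mult_l, Cpow_add_r; ring.
Qed.

Lemma bipoly_hom_eq0 M c : (forall a, bipoly M c a = RtoC 0) ->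
  forall d a, (d <= M + M)%nat -> bipoly_hom M c d a = RtoC 0.
Proof.
  intros H d a Hd.
  apply (cpoly_roots_coef_eq0 (M + M) (fun d => bipoly_hom M c d a) (fun k => RtoC (INR k)));
    [| | exact Hd].
  - intros k k' E; apply INR_eq, RtoC_inj, E.
  - intros k; rewrite <- bipoly_scale; apply H.
Qed.

Definition hom_ratio_coef (M : nat) (c : nat -> nat -> C) (d p : nat) : C :=
  if andb (Nat.leb p d) (Nat.leb (d - p) M) then c p (d - p)%nat else RtoC 0.

Lemma bipoly_hom_ratio M c d a : Cconj a <> RtoC 0 ->
  bipoly_hom M c d a = (Cconj a ^ d * cpoly M (hom_ratio_coef M c d) (a / Cconj a))%C.
Proof.
  intros Ha; unfold bipoly_hom, cpoly; rewrite Csum_mult_l; apply Csum_ext; intros p Hp.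
  unfold hom_ratio_coef; destruct (Nat.leb_spec p d); cbn [andb].
  - rewrite (Csum_ext _ (fun q => if Nat.eqb q (d - p)
                                  then (c p q * (a ^ p * Cconj a ^ q))%C else RtoC 0)).
    2:{ intros q _; destruct (Nat.eqb_spec d (p + q)), (Nat.eqb_spec q (d - p));
          reflexivity || lia. }
    rewrite (Csum_delta (fun q => (c p q * (a ^ p * Cconj a ^ q))%C)).
    destruct (Nat.leb (d - p) M); [|ring].
    replace (Cconj a ^ d)%C with (Cconj a ^ p * Cconj a ^ (d - p))%C
      by (rewrite <- Cpow_add_r; f_equal; lia).
    unfold Cdiv; rewrite Cpow_mult_l, Cpow_inv by exact Ha; field; apply Cpow_nz, Ha.
  - rewrite Csum_eq0; [ring|]; intros q _; destruct (Nat.eqb_spec d (p + q)); [lia | reflexivity].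
Qed.

Definition angle_pt (k : nat) : C := (1, INR k).

Lemma angle_pt_conj_neq0 k : Cconj (angle_pt k) <> RtoC 0.
Proof. intros E; apply (f_equal fst) in E; simpl in E; lra. Qed.

Lemma angle_ratio_inj k k' :
  (angle_pt k / Cconj (angle_pt k) = angle_pt k' / Cconj (angle_pt k'))%C -> k = k'.
Proof.
  intros E; pose proof (angle_pt_conj_neq0 k); pose proof (angle_pt_conj_neq0 k').
  assert (E2 : (angle_pt k * Cconj (angle_pt k'))%C = (angle_pt k' * Cconj (angle_pt k))%C).
  { apply (f_equal (fun w => (w * Cconj (angle_pt k) * Cconj (angle_pt k'))%C)) in E.
    field_simplify in E; [rewrite E; ring | assumption..]. }
  apply (f_equal snd) in E2; unfold angle_pt in E2; simpl in E2; apply INR_eq; lra.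
Qed.

Lemma bipoly_hom_coef_eq0 M c d : (forall a, bipoly_hom M c d a = RtoC 0) ->
  forall p, (p <= M)%nat -> (p <= d)%nat -> (d - p <= M)%nat -> c p (d - p)%nat = RtoC 0.
Proof.
  intros H p Hp Hpd HdM.
  assert (Hcoef : hom_ratio_coef M c d p = RtoC 0).
  { apply (cpoly_roots_coef_eq0 M _ (fun k => angle_pt k / Cconj (angle_pt k))%C angle_ratio_inj);
      [|exact Hp].
    intros k; apply (Cmult_eq0_cancel_l _ _ (Cpow_nz _ d (angle_pt_conj_neq0 k))).
    rewrite <- bipoly_hom_ratio by apply angle_pt_conj_neq0; apply H. }
  unfold hom_ratio_coef in Hcoef; destruct (Nat.leb_spec p d), (Nat.leb_spec (d - p) M);
    simpl in Hcoef; [exact Hcoef | lia..].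
Qed.

Lemma bipoly_coef_eq0 M c : (forall a, bipoly M c a = RtoC 0) ->
  forall p q, (p <= M)%nat -> (q <= M)%nat -> c p q = RtoC 0.
Proof.
  intros H p q Hp Hq.
  pose proof (bipoly_hom_coef_eq0 M c (p + q)
    (fun a => bipoly_hom_eq0 M c H (p + q) a ltac:(lia)) p Hp ltac:(lia) ltac:(lia)) as Hc.
  rewrite Nat.add_comm, Nat.add_sub in Hc; exact Hc.
Qed.

(** * Homogeneous Wigner polynomials *)

Lemma bipoly_ext M c1 c2 a :
  (forall p q, (p <= M)%nat -> (q <= M)%nat -> c1 p q = c2 p q) ->
  bipoly M c1 a = bipoly M c2 a.
Proof.
  intros H; apply Csum_ext; intros p Hp; apply Csum_ext; intros q Hq; rewrite H by assumption.
  reflexivity.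
Qed.

Lemma bipoly_extend M M' c a : (M <= M')%nat ->
  (forall p q, (M < p)%nat \/ (M < q)%nat -> c p q = RtoC 0) -> bipoly M' c a = bipoly M c a.
Proof.
  intros HM Hc; unfold bipoly; rewrite (Csum_extend _ M M' HM).
  - apply Csum_ext; intros p Hp; apply Csum_extend; [exact HM|].
    intros q Hq; rewrite Hc by lia; ring.
  - intros p Hp; apply Csum_eq0; intros q _; rewrite Hc by lia; ring.
Qed.

Lemma bipoly_minus M c1 c2 a :
  bipoly M (fun p q => (c1 p q - c2 p q)%C) a = (bipoly M c1 a - bipoly M c2 a)%C.
Proof.
  unfold bipoly, Cminus; rewrite <- Csum_opp, <- Csum_plus; apply Csum_ext; intros p _.
  rewrite <- Csum_opp, <- Csum_plus; apply Csum_ext; intros; ring.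
Qed.

Definition homog_poly_coef (m : nat) (pc : nat -> C) (p q : nat) : C :=
  if Nat.eqb (p + q) m then pc p else RtoC 0.

Lemma homog_poly_bipoly m pc M a : (m <= M)%nat ->
  homog_poly m pc a = bipoly M (homog_poly_coef m pc) a.
Proof.
  intros HM; unfold homog_poly, bipoly, homog_poly_coef; change Defs.Cpow with Cpow.
  rewrite <- (Csum_trunc _ m M HM); apply Csum_ext; intros p Hp.
  destruct (Nat.leb_spec p m).
  - rewrite (Csum_ext _ (fun q => if Nat.eqb q (m - p)
                                  then (pc p * (a ^ p * Cconj a ^ q))%C else RtoC 0)).
    + rewrite (Csum_delta (fun q => (pc p * (a ^ p * Cconj a ^ q))%C)).
      destruct (Nat.leb_spec (m - p) M); [reflexivity | lia].
    + intros q _; destruct (Nat.eqb_spec (p + q) m), (Nat.eqb_spec q (m - p)); try ring; lia.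
  - symmetry; apply Csum_eq0; intros q _; destruct (Nat.eqb_spec (p + q) m); [lia | ring].
Qed.

Lemma bipoly_wigner_extend N A M a : bounded_support N A -> (N <= M)%nat ->
  bipoly M (wigner_coef N A) a = bipoly N (wigner_coef N A) a.
Proof.
  intros hs HM; apply bipoly_extend; [exact HM|]; intros p q Hpq; unfold wigner_coef.
  rewrite wcoef_out by (auto; lia); ring.
Qed.

Lemma wigner_form_bipoly N A m pc a : bounded_support N A -> wigner_form N A m pc ->
  bipoly N (wigner_coef N A) a = homog_poly m pc a.
Proof.
  intros hs [_ HW].
  assert (HE : RtoC (exp (-2 * Cmod a ^ 2)) <> RtoC 0)
    by apply RtoC_neq0, Rgt_not_eq, exp_pos.
  transitivity (bipoly N (wigner_coef N A) a * RtoC (exp (-2 * Cmod a ^ 2))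
                / RtoC (exp (-2 * Cmod a ^ 2)))%C; [field; exact HE|].
  rewrite <- Wigner_bipoly, HW by exact hs; field; exact HE.
Qed.

Lemma wigner_form_homogeneous N A m pc : bounded_support N A -> wigner_form N A m pc ->
  wcoef_homogeneous N A m.
Proof.
  intros hs hf i j Hij.
  assert (Hzero : forall a,
    bipoly (N + m) (fun p q => (wigner_coef N A p q - homog_poly_coef m pc p q)%C) a = RtoC 0).
  { intros a; rewrite bipoly_minus, <- homog_poly_bipoly, bipoly_wigner_extend by (auto; lia).
    rewrite (wigner_form_bipoly N A m pc) by assumption; ring. }
  destruct (Nat.le_gt_cases i N) as [Hi|Hi]; [|apply wcoef_out; auto].
  destruct (Nat.le_gt_cases j N) as [Hj|Hj]; [|apply wcoef_out; auto].
  pose proof (bipoly_coef_eq0 _ _ Hzero j i ltac:(lia) ltac:(lia)) as Hc.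
  unfold wigner_coef, homog_poly_coef in Hc; destruct (Nat.eqb_spec (j + i) m); [lia|].
  apply (Cmult_eq0_cancel_l (RtoC (wigner_weight j i)));
    [apply RtoC_neq0, Rgt_not_eq, wigner_weight_pos|].
  rewrite <- Hc; ring.
Qed.

Lemma bipoly_wigner_conj N A a : hermitian A ->
  Cconj (bipoly N (wigner_coef N A) a) = bipoly N (wigner_coef N A) a.
Proof.
  intros hh; unfold bipoly; rewrite Csum_conj.
  rewrite (Csum_ext _ (fun p => Csum (fun q =>
    (wigner_coef N A q p * (a ^ q * Cconj a ^ p))%C) N)); [apply Csum_swap|].
  intros p _; rewrite Csum_conj; apply Csum_ext; intros q _; unfold wigner_coef.
  rewrite !Cmult_conj, Cconj_RtoC, !Cpow_conj, Cconj_conj, wcoef_conj, wigner_weight_sym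
    by exact hh; ring.
Qed.

Lemma homogeneous_wigner_form N A m : bounded_support N A -> hermitian A ->
  wcoef_homogeneous N A m -> wigner_form N A m (fun e => wigner_coef N A e (m - e)).
Proof.
  intros hs hh hm.
  assert (Hpoly : forall a, homog_poly m (fun e => wigner_coef N A e (m - e)) a
                            = bipoly N (wigner_coef N A) a).
  { intros a; rewrite (homog_poly_bipoly _ _ (N + m)), <- (bipoly_wigner_extend N A (N + m))
      by (auto; lia).
    apply bipoly_ext; intros p q _ _; unfold homog_poly_coef, wigner_coef.
    destruct (Nat.eqb_spec (p + q) m) as [<-|E].
    - replace (p + q - p)%nat with q by lia; reflexivity.
    - rewrite hm by lia; ring. }
  split; intros a; rewrite Hpoly.
  - pose proof (bipoly_wigner_conj N A a hh) as Hr.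
    destruct (bipoly N (wigner_coef N A) a) as [x y]; apply (f_equal snd) in Hr; simpl in *; lra.
  - apply Wigner_bipoly, hs.
Qed.

Theorem lemma10 (N : nat) (A : Op)
  (hsupp : bounded_support N A) (hherm : hermitian A)
  (hnz : exists i j, A i j <> RtoC 0) :
  ((exists t, 1 < t /\ is_eigenvector N t A) <->
   (forall t, 1 <= t -> is_eigenvector N t A)) /\
  ((forall t, 1 <= t -> is_eigenvector N t A) <->
   (exists m p, wigner_form N A m p)) /\
  (forall m p, wigner_form N A m p ->
     forall t, 1 <= t -> forall i j,
       Vertigo N t A i j = Cmult (RtoC (sqrt t ^ m)) (A i j)).
Proof.
  assert (Heigen : forall m, wcoef_homogeneous N A m -> forall t, 1 <= t -> is_eigenvector N t A).
  { intros m hm t Ht; exists (RtoC (sqrt t ^ m)); apply Vertigo_homogeneous; auto; lra. }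
  assert (Hhom : (exists t, 1 < t /\ is_eigenvector N t A) -> exists m, wcoef_homogeneous N A m).
  { intros [t [Ht He]]; exact (eigenvector_homogeneous N A t hsupp hnz Ht He). }
  split; [|split].
  - split.
    + intros Ht; destruct (Hhom Ht) as [m hm]; exact (Heigen m hm).
    + intros H; exists 2; split; [lra | apply H; lra].
  - split.
    + intros H; destruct Hhom as [m hm]; [exists 2; split; [lra | apply H; lra]|].
      exists m, (fun e => wigner_coef N A e (m - e)); apply homogeneous_wigner_form; assumption.
    + intros [m [p Hf]]; exact (Heigen m (wigner_form_homogeneous N A m p hsupp Hf)).
  - intros m p Hf t Ht; apply Vertigo_homogeneous; [exact hsupp| |lra].
    exact (wigner_form_homogeneous N A m p hsupp Hf).
Qed.
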